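(* Let $q$ be a prime power, $A=\mathbb{F}_q[T]$, and let $m\in A$ be a monic polynomial of degree $d>1$. Write $\det D_m^{(-)}(X)=1+a_1X+a_2X^2+\cdots$ with the matrix $D_m^{(-)}(X)$ defined in the context. Then: (1) $a_1=0$; (2) if $\deg m>2$, then $a_2=0$; (3) if $\deg m=2$, then $a_2=\frac{N_m}{2}\{(q-1)(1-C_m)+N_m-1\}$, where $C_m=\#\{i\in\{1,\dots,N_m\}: L(\alpha_i^{-1})=1\}$.
   Context: For $\alpha\in(A/(m))^\times$ let $r_\alpha\in A$ be the unique representative of $\alpha$ with $\deg r_\alpha<d$; set $\mathrm{Deg}(\alpha)=\deg r_\alpha$ and let $L(\alpha)\in\mathbb{F}_q^\times$ be the leading coefficient of $r_\alpha$. Let $N_m=\#(A/(m))^\times/(q-1)$ and let $\alpha_1,\dots,\alpha_{N_m}$ be all elements of $(A/(m))^\times$ with $L(\alpha)=1$. For a character $\lambda$ of $\mathbb{F}_q^\times$ put $c_{ij}^\lambda=\lambda^{-1}(L(\alpha_i\alpha_j^{-1}))$, $d_{ij}=\mathrm{Deg}(\alpha_i\alpha_j^{-1})$, $D_m^{(\lambda)}(X)=(c_{ij}^\lambda X^{d_{ij}})_{i,j=1,\dots,N_m}$, and $D_m^{(-)}(X)=\prod_{\lambda\ne1}D_m^{(\lambda)}(X)$, the product over all non-trivial characters of $\mathbb{F}_q^\times$. (Since $D_m^{(-)}(0)$ is the identity matrix, $\det D_m^{(-)}(X)$ has constant term $1$ and integer coefficients.) *)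

From HB Require Import structures.
From mathcomp Require Import all_boot all_order all_algebra all_fingroup all_solvable all_field all_character.
Set Implicit Arguments. Unset Strict Implicit. Unset Printing Implicit Defensive.
Import Order.TTheory GRing.Theory Num.Theory.
Local Open Scope ring_scope.

(* F = F_q (a finite field), A = {poly F}, m monic of degree d = (size m).-1.
   (A/(m)) is MathComp's {poly %/ m}; its elements are represented by their
   unique representatives r_alpha of size <= d.-1+1, i.e. deg < d. *)

Section Dm.
Variables (F : finFieldType) (m : {poly F}).

Definition rep (a : {poly %/ m}) : {poly F} := val a.
Definition Deg (a : {poly %/ m}) : nat := (size (rep a)).-1.
Definition Lc (a : {poly %/ m}) : F := lead_coef (rep a).

Definition Lone : {set {poly %/ m}} :=
  [set a : {poly %/ m} | (a \is a GRing.unit) && (Lc a == 1)].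
Definition Nm : nat := #|Lone|.
Definition alpha (i : 'I_Nm) : {poly %/ m} := enum_val i.

(* an element of F viewed in the group F^x (default 1 if it is 0) *)
Definition toU (c : F) : {unit F} := insubd (1%g : {unit F}) c.

(* the group F_q^x, whose characters are its (linear) irreducible characters *)
Definition Fx : {group {unit F}} := [set: {unit F}]%G.

Definition Dlam (k : Iirr Fx) : 'M[{poly algC}]_Nm :=
  \matrix_(i, j)
    ((('chi[Fx]_k (toU (Lc (alpha i * (alpha j)^-1))))^-1)%:P
       * 'X^(Deg (alpha i * (alpha j)^-1))).

Definition Dminus : 'M[{poly algC}]_Nm :=
  \big[mulmx/1%:M]_(k : Iirr Fx | 'chi[Fx]_k != 1) Dlam k.

Definition Cm : nat := #|[set i : 'I_Nm | Lc ((alpha i)^-1) == 1]|.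

End Dm.

(* Expanding det D_m^(lambda)(X) over permutations, the permutation s contributes a
   monomial of degree sum_i d_(i, s i).  As d_ii = 0 and d_ij >= 1 for i != j, only the
   identity contributes in degrees 0 and 1, and in degree 2 only the transpositions (i j)
   with d_ij = d_ji = 1.  Hence every factor is 1 + 0 X + b_lambda X^2 + ..., so a_1 = 0
   and a_2 = sum_lambda b_lambda.
   For a unit g with deg r_g = deg r_(g^-1) = 1, the product r_g r_(g^-1) has degree 2; if
   deg m > 2 it is already reduced mod m, so it would equal 1: hence a_2 = 0.
   When deg m = 2 all off-diagonal d_ij are 1.  By orthogonality, summing
   lambda^-1(L(alpha_i/alpha_j) L(alpha_j/alpha_i)) over lambda != 1 gives q - 2 or -1
   according as the product of leading coefficients is 1 or not, and for each i exactly
   C_m indices j have this product equal to 1, since alpha_j |-> alpha_j/alpha_i,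
   rescaled to leading coefficient 1, permutes the alphas. *)

From HB Require Import structures.
From mathcomp Require Import all_boot all_order all_algebra all_fingroup all_solvable all_field all_character.
From mathcomp Require Import zify ring.
Set Implicit Arguments. Unset Strict Implicit. Unset Printing Implicit Defensive.
Import Order.TTheory GRing.Theory Num.Theory.
Local Open Scope ring_scope.

Lemma perm_moved (T : finType) (s : {perm T}) : s != 1%g -> exists x, s x != x.
Proof.
move=> s1; apply/existsP; apply: contraNT s1; rewrite negb_exists => /forallP fix_s.
by apply/eqP/permP => x; rewrite perm1; apply/eqP; rewrite -[_ == _]negbK fix_s.
Qed.

Lemma perm_moved_image (T : finType) (s : {perm T}) x : s x != x -> s (s x) != s x.
Proof. by apply: contra => /eqP/perm_inj ->. Qed.

Lemma tperm_eq_pair (T : finType) (a b x y : T) : a != b ->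
  ((x != y) && (tperm a b == tperm x y)) = ((x, y) == (a, b)) || ((x, y) == (b, a)).
Proof.
move=> ab; apply/andP/orP => [[xy /eqP E]|[/eqP [-> ->]|/eqP [-> ->]]].
- have : tperm a b x = y by rewrite E tpermL.
  case: tpermP => [-> <-|-> <-|_ _ xE]; [by left | by right |].
  by move: xy; rewrite xE eqxx.
- by [].
- by rewrite eq_sym tpermC.
Qed.

Section MonomialMatrix.
Variables (R : comNzRingType) (n : nat) (c : 'I_n -> 'I_n -> R) (d : 'I_n -> 'I_n -> nat).

Definition monomial_mx : 'M[{poly R}]_n := \matrix_(i, j) ((c i j)%:P * 'X^(d i j)).

Definition perm_deg (s : 'S_n) : nat := \sum_i d i (s i).

Definition det_term (k : nat) (s : 'S_n) : R :=
  (-1) ^+ s * (\prod_i c i (s i)) * (k == perm_deg s)%:R.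

Lemma coef_det_monomial_mx k : (\det monomial_mx)`_k = \sum_(s : 'S_n) det_term k s.
Proof.
rewrite /determinant coef_sum; apply: eq_bigr => s _.
have -> : \prod_i monomial_mx i (s i) = (\prod_i c i (s i))%:P * 'X^(perm_deg s).
  under eq_bigr do rewrite mxE.
  rewrite big_split /= -rmorph_prod; congr (_ * _).
  by rewrite /perm_deg; elim/big_rec2: _ => // i x y _ ->; rewrite exprD.
rewrite mulr_sign /det_term; case: (odd_perm s) => /=.
  by rewrite coefN coefCM coefXn expr1 mulN1r mulNr.
by rewrite !mul1r coefCM coefXn.
Qed.

Hypotheses (c_diag : forall i, c i i = 1) (d_diag : forall i, d i i = 0%N)
  (d_offdiag : forall i j, i != j -> (0 < d i j)%N).

Lemma perm_deg1 : perm_deg 1 = 0%N.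
Proof. by rewrite /perm_deg big1 // => i _; rewrite perm1 d_diag. Qed.

Lemma perm_deg_ge2 (s : 'S_n) : s != 1%g -> (2 <= perm_deg s)%N.
Proof.
case/perm_moved => i si; have ssi := perm_moved_image si.
rewrite /perm_deg (bigD1 i) //= (bigD1 (s i)) //= addnA.
by rewrite (leq_trans _ (leq_addr _ _)) // -(addn1 1) leq_add // d_offdiag // eq_sym.
Qed.

Lemma perm_deg_eq2 (s : 'S_n) : perm_deg s = 2%N ->
  exists i j, [/\ i != j, s = tperm i j, d i j = 1%N & d j i = 1%N].
Proof.
move=> deg2; have [s1|/perm_moved [i si]] := eqVneq s 1%g.
  by move: deg2; rewrite s1 perm_deg1.
have ssi := perm_moved_image si.
have di : (0 < d i (s i))%N by rewrite d_offdiag // eq_sym.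
have dsi : (0 < d (s i) (s (s i)))%N by rewrite d_offdiag // eq_sym.
move: deg2; rewrite /perm_deg (bigD1 i) //= (bigD1 (s i)) //=.
set r := (\sum_(_ | _) _)%N => deg2.
have [r0 d1 d2] : [/\ r = 0, d i (s i) = 1 & d (s i) (s (s i)) = 1]%N.
  by move: di dsi deg2; split; lia.
have fix_other k : k != i -> k != s i -> s k = k.
  move=> ki ksi; apply/eqP; apply: contraT => sk.
  have : (0 < r)%N by rewrite /r (bigD1 k) /= ?ki ?ksi // ltn_addr // d_offdiag // eq_sym.
  by rewrite r0.
have ssi_i : s (s i) = i.
  apply/eqP; apply: contraT => ne.
  by have /perm_inj E := fix_other _ ne ssi; rewrite E eqxx in ssi.
exists i, (s i); split; first by rewrite eq_sym.
- apply/permP => x; case: tpermP => [->|->|xi xsi] //.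
  by apply: fix_other; apply/eqP.
- by [].
- by rewrite -{2}ssi_i.
Qed.

Lemma det_term_lt2 k (s : 'S_n) : (k < 2)%N -> s != 1%g -> det_term k s = 0.
Proof.
move=> k2 /perm_deg_ge2 deg2; rewrite /det_term.
by rewrite ltn_eqF ?mulr0 // (leq_trans k2 deg2).
Qed.

Lemma coef0_det_monomial_mx : (\det monomial_mx)`_0 = 1.
Proof.
rewrite coef_det_monomial_mx (bigD1 1%g) //= big1 ?addr0 => [|s]; last exact: det_term_lt2.
rewrite /det_term odd_perm1 perm_deg1 mul1r mulr1; apply: big1 => i _.
by rewrite perm1 c_diag.
Qed.

Lemma coef1_det_monomial_mx : (\det monomial_mx)`_1 = 0.
Proof.
rewrite coef_det_monomial_mx big1 // => s _.
have [->|] := eqVneq s 1%g; last exact: det_term_lt2.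
by rewrite /det_term perm_deg1 mulr0.
Qed.

Lemma det_term_tperm i j : i != j -> det_term 2 (tperm i j) =
  - (((d i j == 1%N) && (d j i == 1%N))%:R * (c i j * c j i)).
Proof.
move=> ij; have ji : j != i by rewrite eq_sym.
rewrite /det_term odd_tperm ij expr1 mulN1r mulNr mulrC.
have fixed k : k != i -> k != j -> tperm i j k = k.
  by move=> ki kj; rewrite tpermD 1?eq_sym.
have -> : \prod_k c k (tperm i j k) = c i j * c j i.
  rewrite (bigD1 i) //= (bigD1 j) //= tpermL tpermR big1 ?mulr1 // => k /andP [kj ki].
  by rewrite fixed // c_diag.
have -> : perm_deg (tperm i j) = (d i j + d j i)%N.
  rewrite /perm_deg (bigD1 i) //= (bigD1 j) //= tpermL tpermR big1 ?addn0 // => k /andP [kj ki].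
  by rewrite fixed // d_diag.
congr (- ((nat_of_bool _)%:R * _)).
have := d_offdiag ij; have := d_offdiag ji.
by move=> h1 h2; apply/idP/andP => [/eqP E|[/eqP-> /eqP->]] //; split; apply/eqP; lia.
Qed.

Lemma coef2_det_monomial_mx : (\det monomial_mx)`_2 *+ 2 =
  - \sum_(p : 'I_n * 'I_n | p.1 != p.2)
      (((d p.1 p.2 == 1%N) && (d p.2 p.1 == 1%N))%:R * (c p.1 p.2 * c p.2 p.1)).
Proof.
rewrite coef_det_monomial_mx -sumrN -sumrMnl.
under [RHS]eq_bigr => p pne do
  rewrite -det_term_tperm // -(big_pred1_eq +%R (tperm p.1 p.2) (det_term 2)).
rewrite (exchange_big_dep xpredT) //=; apply: eq_bigr => s _.
have [->|t0] := eqVneq (det_term 2 s) 0.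
  by rewrite mul0rn big1 // => p _; case: eqP.
have /perm_deg_eq2 [a [b [ab sE _ _]]] : perm_deg s = 2%N.
  by apply/esym/eqP; apply: contraNT t0 => /negbTE; rewrite /det_term => ->; rewrite mulr0.
rewrite (eq_bigl (pred2 (a, b) (b, a))) => [|[i j]]; last by rewrite sE /= tperm_eq_pair.
rewrite sumr_const card2 /=; congr (_ *+ _).
by have -> : (a, b) != (b, a) by rewrite xpair_eqE negb_and ab.
Qed.

End MonomialMatrix.

Lemma coef012_prod (R : comNzRingType) (I : finType) (P : pred I) (f : I -> {poly R}) :
  (forall i, P i -> (f i)`_0 = 1 /\ (f i)`_1 = 0) ->
  [/\ (\prod_(i | P i) f i)`_0 = 1, (\prod_(i | P i) f i)`_1 = 0
    & (\prod_(i | P i) f i)`_2 = \sum_(i | P i) (f i)`_2].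
Proof.
move=> f01; pose K (p : {poly R}) s := [/\ p`_0 = 1, p`_1 = 0 & p`_2 = s].
suff : K (\prod_(i | P i) f i) (\sum_(i | P i) (f i)`_2) by [].
apply: big_rec2; first by rewrite /K -[1]polyC1 !coefC.
move=> i p s Pi [p0 p1 p2]; have [fi0 fi1] := f01 i Pi.
rewrite /K !coefM !big_ord_recr !big_ord0 /= !add0r.
by rewrite fi0 fi1 p0 p1 p2 !(mul0r, mulr0, mulr1, mul1r) !addr0 addrC.
Qed.

Lemma sum_offdiag_indicator (R : pzRingType) (N C : nat) (P : rel 'I_N) (x : R) :
  (forall i, P i i) -> (forall i, #|[pred j | P i j]| = C) ->
  \sum_(p : 'I_N * 'I_N | p.1 != p.2) (x * (P p.1 p.2)%:R - 1) =
  N%:R * (x * C%:R - N%:R - x + 1).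
Proof.
move=> P_refl cardP; rewrite mulr_natl.
have -> : \sum_(p : 'I_N * 'I_N | p.1 != p.2) (x * (P p.1 p.2)%:R - 1) =
          \sum_i \sum_(j | i != j) (x * (P i j)%:R - 1) by rewrite pair_big_dep.
rewrite -[X in _ *+ X]card_ord -sumr_const; apply: eq_bigr => i _.
have rowP : \sum_j (x * (P i j)%:R - 1) = x * C%:R - N%:R.
  rewrite sumrB -mulr_sumr -natr_sum sumr_const card_ord -(cardP i) -sum1_card.
  rewrite [X in _ = x * X%:R - _]big_mkcond.
  by congr (x * _%:R - _); apply: eq_bigr => j _; case: (P i j).
rewrite (eq_bigl (fun j => j != i)) => [|j]; last by rewrite eq_sym.
apply: (addrI (x - 1)); move: rowP; rewrite (bigD1 i) //= P_refl mulr1 => ->.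
by rewrite [RHS]addrC -[RHS]addrA (addrC 1) !subrK.
Qed.

Section AbelianCharacters.
Variables (gT : finGroupType) (G : {group gT}).
Hypothesis abG : abelian G.

Lemma sum_nontrivial_irr w : w \in G ->
  \sum_(k | 'chi[G]_k != 1) 'chi_k w = #|G|%:R * (w == 1%g)%:R - 1.
Proof.
move=> Gw; have lin k : 'chi[G]_k \is a linear_char by apply/char_abelianP.
have all_irr : \sum_k 'chi[G]_k w = #|G|%:R * (w == 1%g)%:R.
  have := second_orthogonality_relation w (group1 G).
  under eq_bigr do rewrite lin_char1 // rmorph1 mulr1.
  move=> ->; rewrite (class1g (group1 G)) inE.
  by case: eqP => [->|]; rewrite ?mulr0 // cent11T setIT mulr1.
rewrite (bigD1 0) //= irr0 cfun1E Gw /= in all_irr.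
by rewrite -all_irr addrC addrK; apply: eq_bigl => k; rewrite irr_eq1.
Qed.

End AbelianCharacters.

Section UnitCharacters.
Variable F : finFieldType.

Lemma Fx_abelian : abelian (Fx F).
Proof. by apply/centsP => x _ y _; apply: val_inj; apply: mulrC. Qed.

Lemma Fx_lin_char k : 'chi[Fx F]_k \is a linear_char.
Proof. exact/char_abelianP/Fx_abelian. Qed.

Lemma toU_val (x : F) : x != 0 -> val (toU x) = x.
Proof. by move=> x0; rewrite /toU insubdK // unitfE. Qed.

Lemma toU1 : toU (1 : F) = 1%g.
Proof. by apply: val_inj; rewrite toU_val ?oner_eq0. Qed.

Lemma sum_nontrivial_irr_inv2 (u v : F) : u != 0 -> v != 0 ->
  \sum_(k | 'chi[Fx F]_k != 1) ('chi_k (toU u))^-1 * ('chi_k (toU v))^-1 =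
  (#|F|.-1)%:R * (u * v == 1)%:R - 1.
Proof.
move=> u0 v0; have inFx w : w \in Fx F by rewrite inE.
under eq_bigr do rewrite -!lin_charV ?Fx_lin_char // -lin_charM ?Fx_lin_char //.
rewrite sum_nontrivial_irr ?Fx_abelian // card_finField_unit.
congr (_ * (nat_of_bool _)%:R - _).
by rewrite -val_eqE /= !toU_val // -invfM invr_eq1.
Qed.

End UnitCharacters.

Section PolyQuotient.
Variables (F : finFieldType) (m : {poly F}).
Hypotheses (m_monic : m \is monic) (m_gt1 : (1 < size m)%N).

Lemma mk_monicE : mk_monic m = m.
Proof. by rewrite /mk_monic m_monic m_gt1. Qed.

Lemma size_rep (a : {poly %/ m}) : (size (rep a) < size m)%N.
Proof. by rewrite -{2}mk_monicE size_mk_monic. Qed.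

Lemma Deg_lt (a : {poly %/ m}) : (Deg a < (size m).-1)%N.
Proof. by have := size_rep a; rewrite /Deg; lia. Qed.

Lemma rep1 : rep (1 : {poly %/ m}) = 1.
Proof. by rewrite /rep /= polyC1. Qed.

Lemma Lc1 : Lc (1 : {poly %/ m}) = 1.
Proof. by rewrite /Lc rep1 lead_coef1. Qed.

Lemma Deg1 : Deg (1 : {poly %/ m}) = 0%N.
Proof. by rewrite /Deg rep1 size_poly1. Qed.

Lemma rep_mul_small (a b : {poly %/ m}) :
  (size (rep a * rep b)%R < size m)%N -> rep (a * b) = rep a * rep b.
Proof.
move=> small; rewrite [LHS]/rep [val _]/=.
by apply: Pdiv.CommonRing.rmodp_small; apply: leq_trans small _; rewrite mk_monicE.
Qed.

Lemma Lc_scale c (a : {poly %/ m}) : Lc (c *: a) = c * Lc a.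
Proof. by rewrite /Lc (poly_of_qpolyZ a c : rep _ = _) lead_coefZ. Qed.

Lemma rep_unit_neq0 (a : {poly %/ m}) : a \is a GRing.unit -> rep a != 0.
Proof. by apply: contraTneq => a0; rewrite (_ : a = 0) ?unitr0 //; apply: val_inj. Qed.

Lemma Lc_unit_neq0 (a : {poly %/ m}) : a \is a GRing.unit -> Lc a != 0.
Proof. by move=> ua; rewrite lead_coef_eq0 rep_unit_neq0. Qed.

Lemma LoneP (a : {poly %/ m}) : reflect (a \is a GRing.unit /\ Lc a = 1) (a \in Lone m).
Proof. by rewrite inE; apply: (iffP andP) => -[-> /eqP]. Qed.

Lemma Deg_unit_small (g : {poly %/ m}) : g \is a GRing.unit ->
  (Deg g + Deg g^-1 < (size m).-1)%N -> Deg g = 0%N.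
Proof.
move=> ug small; have ugV : g^-1 \is a GRing.unit by rewrite unitrV.
have sizeM : size (rep g * rep g^-1)%R = (Deg g + Deg g^-1).+1.
  rewrite size_mul ?rep_unit_neq0 // /Deg.
  move: (rep_unit_neq0 ug) (rep_unit_neq0 ugV); rewrite -!size_poly_gt0.
  by case: (size (rep g)) => // p _; case: (size (rep g^-1)) => // q _; rewrite addSn addnS.
have E : rep g * rep g^-1 = 1.
  by rewrite -rep_mul_small ?mulrV ?rep1 // sizeM; lia.
by move: sizeM; rewrite E size_poly1; lia.
Qed.

Lemma eq_Lone_Deg0 (a b : {poly %/ m}) : a \in Lone m -> b \in Lone m ->
  Deg (a / b) = 0%N -> a = b.
Proof.
move=> /LoneP [ua La] /LoneP [ub Lb] D0; set c := (rep (a / b))`_0.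
have rc : rep (a / b) = c%:P by apply: size1_polyC; move: D0; rewrite /Deg; lia.
have ra : rep a = c%:P * rep b.
  rewrite -rc -rep_mul_small ?divrK // rc mul_polyC.
  exact: leq_ltn_trans (size_scale_leq _ _) (size_rep _).
have c1 : c = 1 by move: La; rewrite /Lc ra mul_polyC lead_coefZ -/(Lc b) Lb mulr1.
by apply: val_inj; rewrite -[val a]/(rep a) ra c1 mul1r.
Qed.

Definition normalize (a : {poly %/ m}) := (Lc a)^-1 *: a.

Lemma normalize_Lone (a : {poly %/ m}) : a \is a GRing.unit -> normalize a \in Lone m.
Proof.
move=> ua; have La := Lc_unit_neq0 ua; apply/LoneP; split.
  by rewrite /normalize scaler_unit // unitfE invr_eq0.
by rewrite /normalize Lc_scale mulVf.
Qed.

Lemma normalizeZ c (a : {poly %/ m}) : c != 0 -> normalize (c *: a) = normalize a.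
Proof. by move=> c0; rewrite /normalize Lc_scale scalerA invfM mulrAC mulVf ?mul1r. Qed.

Lemma normalize_id (a : {poly %/ m}) : Lc a = 1 -> normalize a = a.
Proof. by move=> La; rewrite /normalize La invr1 scale1r. Qed.

Lemma normalizeV (a : {poly %/ m}) : a \is a GRing.unit -> (normalize a)^-1 = Lc a *: a^-1.
Proof.
move=> ua; apply: mulr1_eq.
by rewrite /normalize -scalerAl -scalerAr scalerA mulVf ?Lc_unit_neq0 // mulrV // scale1r.
Qed.

Lemma normalizeMl (a b : {poly %/ m}) : a \is a GRing.unit ->
  normalize (normalize a * b) = normalize (a * b).
Proof. by move=> ua; rewrite -scalerAl normalizeZ // invr_eq0 Lc_unit_neq0. Qed.

Lemma card_Lc_pair (a : {poly %/ m}) : a \in Lone m ->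
  #|[pred b in Lone m | Lc (a / b) * Lc (b / a) == 1]| =
  #|[pred g in Lone m | Lc g^-1 == 1]|.
Proof.
move=> /LoneP [ua La].
rewrite -!sum1_card !big_mkcondr /=.
rewrite [RHS](reindex_onto (fun b => normalize (b / a)) (fun g => normalize (g * a))) /=.
  apply: eq_big => b.
    apply/idP/andP => [bL|[nL /eqP <-]]; last first.
      by apply: normalize_Lone; rewrite unitrM ua andbT; case/LoneP: nL.
    have /LoneP [ub Lb] := bL; have uba : b / a \is a GRing.unit by rewrite unitrM ub unitrV.
    by rewrite normalize_Lone // normalizeMl // divrK // normalize_id.
  case/LoneP => ub _; have uba : b / a \is a GRing.unit by rewrite unitrM ub unitrV.
  by rewrite normalizeV // Lc_scale invrM ?unitrV // invrK mulrC.
move=> g /LoneP [ug Lg].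
by rewrite normalizeMl ?unitrM ?ug // mulrK // normalize_id.
Qed.

End PolyQuotient.

Section DminusCoefficients.
Variables (F : finFieldType) (m : {poly F}).
Hypotheses (m_monic : m \is monic) (m_gt1 : (1 < size m)%N).

Lemma alpha_Lone (i : 'I_(Nm m)) : alpha i \in Lone m.
Proof. exact: enum_valP. Qed.

Lemma alpha_unit (i : 'I_(Nm m)) : alpha i \is a GRing.unit.
Proof. by case/LoneP: (alpha_Lone i). Qed.

Lemma alpha_div_unit (i j : 'I_(Nm m)) : alpha i / alpha j \is a GRing.unit.
Proof. by rewrite unitrM alpha_unit unitrV alpha_unit. Qed.

Lemma card_alpha (P : pred {poly %/ m}) :
  #|[pred i | P (alpha i)]| = #|[pred g in Lone m | P g]|.
Proof. by rewrite -!sum1_card (big_enum_val_cond (A := mem (Lone m))). Qed.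

Lemma card_Lc_alpha_pair (i : 'I_(Nm m)) :
  #|[pred j | Lc (alpha i / alpha j) * Lc (alpha j / alpha i) == 1]| = Cm m.
Proof.
rewrite (card_alpha (fun g => Lc (alpha i / g) * Lc (g / alpha i) == 1)).
by rewrite (card_Lc_pair (alpha_Lone i)) -card_alpha /Cm cardsE.
Qed.

Definition Dlam_coef (k : Iirr (Fx F)) (i j : 'I_(Nm m)) : algC :=
  ('chi[Fx F]_k (toU (Lc (alpha i / alpha j))))^-1.

Definition Dlam_deg (i j : 'I_(Nm m)) : nat := Deg (alpha i / alpha j).

Lemma Dlam_monomial_mx k : Dlam m k = monomial_mx (Dlam_coef k) Dlam_deg.
Proof. by []. Qed.

Lemma alpha_divV (i j : 'I_(Nm m)) : (alpha i / alpha j)^-1 = alpha j / alpha i.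
Proof. by rewrite invrM ?unitrV ?alpha_unit // invrK. Qed.

Lemma alpha_divrr (i : 'I_(Nm m)) : alpha i / alpha i = 1.
Proof. exact/divrr/alpha_unit. Qed.

Lemma Dlam_coef_diag k i : Dlam_coef k i i = 1.
Proof. by rewrite /Dlam_coef alpha_divrr Lc1 toU1 lin_char1 ?Fx_lin_char ?invr1. Qed.

Lemma Dlam_deg_diag i : Dlam_deg i i = 0%N.
Proof. by rewrite /Dlam_deg alpha_divrr Deg1. Qed.

Lemma Dlam_deg_offdiag i j : i != j -> (0 < Dlam_deg i j)%N.
Proof.
apply: contraNT; rewrite -eqn0Ngt => /eqP.
by move/(eq_Lone_Deg0 m_monic m_gt1 (alpha_Lone i) (alpha_Lone j))/enum_val_inj->.
Qed.

Lemma coef01_det_Dlam (k : Iirr (Fx F)) :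
  (\det (Dlam m k))`_0 = 1 /\ (\det (Dlam m k))`_1 = 0.
Proof.
rewrite Dlam_monomial_mx; split.
  exact: coef0_det_monomial_mx (Dlam_coef_diag k) Dlam_deg_diag Dlam_deg_offdiag.
exact: coef1_det_monomial_mx Dlam_deg_diag Dlam_deg_offdiag.
Qed.

Lemma coef12_det_Dminus : (\det (Dminus m))`_1 = 0 /\
  (\det (Dminus m))`_2 = \sum_(k | 'chi[Fx F]_k != 1) (\det (Dlam m k))`_2.
Proof.
rewrite /Dminus (big_morph _ (@det_mulmx _ _) (det1 _ _)).
have [_ -> ->] := coef012_prod (P := fun k => 'chi[Fx F]_k != 1) (fun k _ => coef01_det_Dlam k).
by [].
Qed.

Lemma coef2_det_Dlam_gt2 (k : Iirr (Fx F)) :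
  (2 < (size m).-1)%N -> (\det (Dlam m k))`_2 = 0.
Proof.
move=> deg_gt2.
have := coef2_det_monomial_mx (Dlam_coef_diag k) Dlam_deg_diag Dlam_deg_offdiag.
rewrite -Dlam_monomial_mx big1 ?oppr0 => [/eqP|[i j] /= ij]; first by rewrite mulrn_eq0 => /eqP.
case: andP => [[/eqP D1 /eqP D2]|_]; last by rewrite mul0r.
have := Deg_unit_small m_monic m_gt1 (alpha_div_unit i j).
by rewrite alpha_divV -/(Dlam_deg i j) -/(Dlam_deg j i) D1 D2 => /(_ deg_gt2).
Qed.

Lemma coef2_det_Dminus_deg2 : (size m).-1 = 2%N ->
  (\det (Dminus m))`_2 *+ 2 =
  - \sum_(p : 'I_(Nm m) * 'I_(Nm m) | p.1 != p.2)
      ((#|F|.-1)%:R * (Lc (alpha p.1 / alpha p.2) * Lc (alpha p.2 / alpha p.1) == 1)%:R - 1).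
Proof.
move=> deg2; have deg1 i j : i != j -> Dlam_deg i j = 1%N.
  move=> ij; have := Dlam_deg_offdiag ij.
  by have := Deg_lt m_monic m_gt1 (alpha i / alpha j); rewrite /Dlam_deg; lia.
rewrite (proj2 coef12_det_Dminus) -sumrMnl.
under eq_bigr => k _ do
  rewrite Dlam_monomial_mx
          (coef2_det_monomial_mx (Dlam_coef_diag k) Dlam_deg_diag Dlam_deg_offdiag).
rewrite sumrN exchange_big /=; congr (- _); apply: eq_bigr => -[i j] /= ij.
have -> : (Dlam_deg i j == 1%N) && (Dlam_deg j i == 1%N) by rewrite !deg1 // eq_sym.
under eq_bigr do rewrite mul1r.
by rewrite sum_nontrivial_irr_inv2 // Lc_unit_neq0 // alpha_div_unit.
Qed.

End DminusCoefficients.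

Theorem proposition4p1 (F : finFieldType) (m : {poly F}) :
  m \is monic -> (1 < (size m).-1)%N ->
  let a := fun n : nat => (\det (Dminus m))`_n in
  [/\ a 1%N = 0,
      (2 < (size m).-1)%N -> a 2%N = 0
    & (size m).-1 = 2%N ->
      a 2%N = (Nm m)%:R / 2 *
              ((#|F|.-1)%:R * (1 - (Cm m)%:R) + (Nm m)%:R - 1)].
Proof.
move=> m_monic deg_gt1 a; have m_gt1 : (1 < size m)%N by lia.
have [a1 a2] := coef12_det_Dminus m_monic m_gt1.
split=> // [deg_gt2 | deg2].
  by rewrite /a a2 big1 // => k _; apply: coef2_det_Dlam_gt2.
have := coef2_det_Dminus_deg2 m_monic m_gt1 deg2.
rewrite (sum_offdiag_indicator _ _ (@card_Lc_alpha_pair F m)) => [a2E|i]; last first.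
  by rewrite alpha_divrr Lc1 mulr1.
have two_neq0 : (2 : algC) != 0 by rewrite pnatr_eq0.
by rewrite /a -[LHS](mulfK two_neq0) mulr_natr a2E; field.
Qed.
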